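(* Let $\lambda<\mathfrak{t}$ be an infinite cardinal, let $A\subseteq\omega$ be infinite, and let $(f_\alpha:\alpha<\lambda)$ be a sequence of functions $f_\alpha:\omega\to[\omega]^{<\aleph_0}$ such that $f_\beta\le_A f_\alpha$ for all $\alpha<\beta<\lambda$, and such that for each $\alpha<\lambda$ the set $\{m\in A: f_\alpha(m)=\emptyset\}$ is finite. Then there exist an infinite $B\subseteq A$ and a function $f:\omega\to[\omega]^{<\aleph_0}$ such that $f\le_B f_\alpha$ for every $\alpha<\lambda$ and $f(m)\neq\emptyset$ for every $m\in B$.
   Context: $[\omega]^{<\aleph_0}$ is the set of finite subsets of $\omega$. For $X,Y\subseteq\omega$ (or of $\omega\times\omega$), $X\subseteq_* Y$ means $X\setminus Y$ is finite. A tower is a sequence $(X_\alpha:\alpha<\kappa)$ of infinite subsets of $\omega$ with $X_\beta\subseteq_* X_\alpha$ whenever $\alpha<\beta<\kappa$; a pseudo-intersection of a family of sets is an infinite $X$ with $X\subseteq_* B$ for every member $B$ of the family. $\mathfrak{t}$ is the least cardinality of a tower with no pseudo-intersection. For $f,g:\omega\to[\omega]^{<\aleph_0}$ and infinite $A\subseteq\omega$, $f\le_A g$ means that $\{n\in A: f(n)\not\subseteq g(n)\}$ is finite. *)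

(* plain Prop-valued sets of naturals; finite subsets of omega
   are represented as lists of naturals (read as the set of their elements). *)
From Stdlib Require Import List Arith.
Import ListNotations.

Definition finite_set (X : nat -> Prop) : Prop := exists N, forall n, X n -> n < N.
Definition infinite_set (X : nat -> Prop) : Prop := forall N, exists n, N <= n /\ X n.

Definition subset_star (X Y : nat -> Prop) : Prop :=
  finite_set (fun n => X n /\ ~ Y n).

Definition fin_subset (s t : list nat) : Prop := forall x, In x s -> In x t.

Definition le_on (A : nat -> Prop) (f g : nat -> list nat) : Prop :=
  finite_set (fun n => A n /\ ~ fin_subset (f n) (g n)).

Definition strict_well_order {I : Type} (lt : I -> I -> Prop) : Prop :=
  well_founded lt /\
  (forall a b c, lt a b -> lt b c -> lt a c) /\
  (forall a b, lt a b \/ a = b \/ lt b a).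

Definition card_le (I J : Type) : Prop := exists g : I -> J, forall x y, g x = g y -> x = y.

(* a well-order (I, lt) is (isomorphic to) a cardinal, i.e. an initial ordinal:
   every proper initial segment has strictly smaller cardinality *)
Definition initial_ordinal {I : Type} (lt : I -> I -> Prop) : Prop :=
  strict_well_order lt /\ forall a : I, ~ card_le I {b : I | lt b a}.

Definition is_tower {I : Type} (lt : I -> I -> Prop) (X : I -> nat -> Prop) : Prop :=
  (forall i, infinite_set (X i)) /\ (forall i j, lt i j -> subset_star (X j) (X i)).

Definition has_pseudo_intersection {I : Type} (X : I -> nat -> Prop) : Prop :=
  exists Y, infinite_set Y /\ forall i, subset_star Y (X i).

(* |L| < t : every tower whose length is a cardinal kappa <= |L|
   has a pseudo-intersection *)
Definition card_lt_t (L : Type) : Prop :=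
  forall (I : Type) (ltI : I -> I -> Prop), initial_ordinal ltI -> card_le I L ->
  forall X : I -> nat -> Prop, is_tower ltI X -> has_pseudo_intersection X.

(* Code the pairs (m, k) with m in A and k in f_a(m) as natural numbers by Cantor pairing.
   Since the f_a decrease mod finite along lambda, these codes form a tower X_a of length
   lambda < t, so they have a pseudo-intersection Y.  Inside X_{a0}, only finitely many codes
   have first coordinate below any bound, so Y /\ X_{a0} projects onto an infinite B <= A;
   choosing one point k of each fibre over m in B and putting f(m) = {k} gives f <=_B f_a,
   because almost all of Y lies in X_a. *)
From Stdlib Require Import List Arith.
Import ListNotations.
From Stdlib Require Import Cantor ClassicalEpsilon Lia.

Lemma finite_set_incl (X Y : nat -> Prop) :
  (forall n, X n -> Y n) -> finite_set Y -> finite_set X.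
Proof. intros XY [N HN]; exists N; auto. Qed.

Lemma subset_star_incl_l (X X' Y : nat -> Prop) :
  (forall n, X' n -> X n) -> subset_star X Y -> subset_star X' Y.
Proof. intros HX; apply finite_set_incl; intros n [? ?]; auto. Qed.

Lemma infinite_set_inter_subset_star (X Y : nat -> Prop) :
  infinite_set X -> subset_star X Y -> infinite_set (fun n => X n /\ Y n).
Proof.
  intros HX [N HN] M. destruct (HX (M + N)) as [n [Hn HXn]].
  exists n; split; [lia|split; [exact HXn|]].
  destruct (Classical_Prop.classic (Y n)) as [|HY]; [assumption|].
  specialize (HN n (conj HXn HY)); lia.
Qed.

Lemma list_bound (G : nat -> list nat) (N : nat) :
  exists K, forall m k, m < N -> In k (G m) -> k <= K.
Proof.
  induction N as [|N [K HK]]; [exists 0; lia|].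
  exists (max K (list_max (G N))). intros m k Hm Hk.
  destruct (Nat.eq_dec m N) as [->|].
  - enough (k <= list_max (G N)) by lia.
    pose proof (proj1 (list_max_le (G N) _) (le_n _)) as Hmax.
    exact (proj1 (Forall_forall _ _) Hmax k Hk).
  - specialize (HK m k ltac:(lia) Hk); lia.
Qed.

Definition code (P : nat -> nat -> Prop) (n : nat) : Prop :=
  let '(m, k) := of_nat n in P m k.

Lemma code_to_nat (P : nat -> nat -> Prop) m k : code P (to_nat (m, k)) <-> P m k.
Proof. unfold code; rewrite cancel_of_to; reflexivity. Qed.

Lemma code_inv (P : nat -> nat -> Prop) n :
  code P n -> exists m k, n = to_nat (m, k) /\ P m k.
Proof.
  unfold code; rewrite <- (cancel_to_of n); rewrite cancel_of_to.
  destruct (of_nat n) as [m k]; eauto.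
Qed.

Lemma finite_code_box (N K : nat) : finite_set (code (fun m k => m < N /\ k <= K)).
Proof.
  exists (S (K * 2 + (K + N) * S (K + N))). intros n Hn.
  destruct (code_inv _ _ Hn) as (m & k & -> & Hm & Hk).
  pose proof (to_nat_spec m k).
  assert ((k + m) * S (k + m) <= (K + N) * S (K + N)) by (apply Nat.mul_le_mono; lia).
  lia.
Qed.

Lemma finite_code_prefix (G : nat -> list nat) (N : nat) :
  finite_set (code (fun m k => m < N /\ In k (G m))).
Proof.
  destruct (list_bound G N) as [K HK].
  apply finite_set_incl with (Y := code (fun m k => m < N /\ k <= K)); [|apply finite_code_box].
  intros n Hn. destruct (code_inv _ _ Hn) as (m & k & -> & Hm & Hk).
  apply code_to_nat; eauto.
Qed.

Definition graph (A : nat -> Prop) (G : nat -> list nat) : nat -> Prop :=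
  code (fun m k => A m /\ In k (G m)).

Lemma graph_infinite (A : nat -> Prop) (G : nat -> list nat) :
  infinite_set A -> finite_set (fun m => A m /\ G m = []) -> infinite_set (graph A G).
Proof.
  intros HA [N0 HN0] N. destruct (HA (N + N0)) as [m [Hm HAm]].
  destruct (G m) as [|k l] eqn:Gm; [specialize (HN0 m (conj HAm Gm)); lia|].
  exists (to_nat (m, k)). pose proof (to_nat_non_decreasing m k).
  split; [lia|]. apply code_to_nat. rewrite Gm; simpl; auto.
Qed.

Lemma graph_subset_star (A : nat -> Prop) (G H : nat -> list nat) :
  le_on A G H -> subset_star (graph A G) (graph A H).
Proof.
  intros [N HN]. apply finite_set_incl with (Y := code (fun m k => m < N /\ In k (G m)));
    [|apply finite_code_prefix].
  intros n [HG HH]. destruct (code_inv _ _ HG) as (m & k & -> & HAm & Hk).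
  apply code_to_nat; split; [|exact Hk].
  apply HN; split; [exact HAm|]. intros GH.
  apply HH, code_to_nat; auto.
Qed.

Definition first_coords (Z : nat -> Prop) (m : nat) : Prop := exists k, Z (to_nat (m, k)).

(* A graph has only finitely many codes with first coordinate below [N], so an infinite part of it
   must reach arbitrarily large first coordinates. *)
Lemma first_coords_infinite (A : nat -> Prop) (G : nat -> list nat) (Z : nat -> Prop) :
  (forall n, Z n -> graph A G n) -> infinite_set Z -> infinite_set (first_coords Z).
Proof.
  intros ZG HZ N. destruct (finite_code_prefix G N) as [N' HN'].
  destruct (HZ N') as [n [Hn HZn]].
  destruct (code_inv _ _ (ZG n HZn)) as (m & k & -> & _ & Hk).
  exists m; split; [|exists k; exact HZn].
  destruct (le_lt_dec N m) as [|Hm]; [assumption|].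
  specialize (HN' _ (proj2 (code_to_nat _ m k) (conj Hm Hk))); lia.
Qed.

Definition fibre_pick (Z : nat -> Prop) (m : nat) : list nat :=
  [epsilon (inhabits 0) (fun k => Z (to_nat (m, k)))].

Lemma fibre_pick_spec (Z : nat -> Prop) m :
  first_coords Z m -> exists k, fibre_pick Z m = [k] /\ Z (to_nat (m, k)).
Proof. intros HZ; eexists; split; [reflexivity|exact (epsilon_spec _ _ HZ)]. Qed.

Lemma fibre_pick_le_on (Z : nat -> Prop) (A : nat -> Prop) (H : nat -> list nat) :
  subset_star Z (graph A H) -> le_on (first_coords Z) (fibre_pick Z) H.
Proof.
  intros [N HN]; exists N. intros m [HZm Hsub].
  destruct (fibre_pick_spec _ _ HZm) as (k & Hk & HZk).
  assert (Hout : ~ graph A H (to_nat (m, k))).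
  { intros Hg. apply code_to_nat in Hg. apply Hsub. rewrite Hk.
    intros x [<-|[]]. exact (proj2 Hg). }
  specialize (HN _ (conj HZk Hout)). pose proof (to_nat_non_decreasing m k). lia.
Qed.

Theorem mainTheorem9
  (L : Type) (ltL : L -> L -> Prop)
  (HL : initial_ordinal ltL)
  (Hinf : card_le nat L)
  (Ht : card_lt_t L)
  (A : nat -> Prop) (HA : infinite_set A)
  (F : L -> nat -> list nat)
  (Hmono : forall a b, ltL a b -> le_on A (F b) (F a))
  (Hne : forall a, finite_set (fun m => A m /\ F a m = [])) :
  exists B : nat -> Prop,
    (forall n, B n -> A n) /\ infinite_set B /\
    exists f : nat -> list nat,
      (forall a, le_on B f (F a)) /\ (forall m, B m -> f m <> []).
Proof.
  pose (X a := graph A (F a)).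
  assert (Htower : is_tower ltL X).
  { split; intros; [apply graph_infinite | apply graph_subset_star]; auto. }
  assert (HLL : card_le L L) by (exists (fun x => x); auto).
  destruct (Ht L ltL HL HLL X Htower) as [Y [HY HYX]].
  destruct Hinf as [g _]. pose (Z n := Y n /\ X (g 0) n).
  exists (first_coords Z). split; [|split].
  - intros m [k [_ Hk]]. exact (proj1 (proj1 (code_to_nat _ m k) Hk)).
  - apply first_coords_infinite with (A := A) (G := F (g 0)); [intros n []; auto|].
    exact (infinite_set_inter_subset_star _ _ HY (HYX (g 0))).
  - exists (fibre_pick Z). split; [|intros m _; discriminate].
    intros a. apply fibre_pick_le_on with (A := A).
    apply subset_star_incl_l with (X := Y); [intros n []; auto | apply HYX].
Qed.
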